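(* Let $Q$ be a prime and $\lambda\in\mathbb{N}$ a statistical security parameter. Let $E_1,\dots,E_m$ be encryption functions of an additively homomorphic encryption scheme under $m$ keys of Alice with plaintext moduli $q_1,\dots,q_m$ (pairwise coprime), supporting homomorphic addition of ciphertexts and multiplication of a ciphertext by a plaintext constant modulo $q_i$. If $m=1$ then $q_1=Q$; if $m>1$ then $Q'=\prod_{i=1}^m q_i > Q^2 2^\lambda$. Consider the protocol: Alice picks $s_A\in\mathbb{F}_Q$ uniformly and sends $c_i=E_i(s_A\bmod q_i)$ for $1\le i\le m$. Bob picks $s_B\in\mathbb{F}_Q$ and $r_B\in\mathbb{F}_Q^*$ uniformly, and $u$ uniformly in $\{0,\dots,2^\lambda-1\}$ if $m>1$ (else $u=0$), and returns $d_i=(c_i+E_i(s_B))\cdot((r_B^{-1}\bmod Q)\bmod q_i)+E_i(uQ\bmod q_i)$. Alice decrypts all $d_i$, recovers (by the Chinese Remainder Theorem if $m>1$) the value $v\in\mathbb{Z}_{Q'}$ (with $Q'=Q$ if $m=1$), and sets $r_A=v\bmod Q$. Then the protocol is correct: $r_Ar_B=s_A+s_B$ in $\mathbb{F}_Q$.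
   Context: Elements of $\mathbb{F}_Q$ are represented by integers in $\{0,\dots,Q-1\}$; $r_B^{-1}\bmod Q$ is the inverse of $r_B$ in $\mathbb{F}_Q$; $\mathbb{F}_Q^*=\mathbb{F}_Q\setminus\{0\}$. Operations on ciphertexts $E_i(\cdot)$ denote the corresponding homomorphic operations, so $d_i$ decrypts to $((s_A+s_B)(r_B^{-1}\bmod Q)+uQ)\bmod q_i$. *)

From HB Require Import structures.
From mathcomp Require Import all_boot all_algebra.
Set Implicit Arguments. Unset Strict Implicit. Unset Printing Implicit Defensive.

(* Plaintexts are natural numbers; the plaintext space of a
   key with modulus q is Z_q, represented by {0,...,q-1}. *)

Record AHE (q : nat) := {
  ctxt : Type;
  rnd : Type;
  enc : rnd -> nat -> ctxt;
  dec : ctxt -> nat;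
  hadd : ctxt -> ctxt -> ctxt;
  hmul : ctxt -> nat -> ctxt;
  dec_enc : forall r x, dec (enc r x) = x %% q;
  dec_hadd : forall a b, dec (hadd a b) = (dec a + dec b) %% q;
  dec_hmul : forall a k, dec (hmul a k) = (dec a * k) %% q
}.

Definition invQ (Q r : nat) : nat := nat_of_ord ((inZp r : 'F_Q)^-1)%R.

(** Each [d_i] decrypts to [w mod q_i], where [w = (s_A + s_B) r_B^{-1} + u Q]
    is the masked sum Bob computes homomorphically.  For [m = 1] this is
    [w mod Q] outright.  For [m > 1] the mask keeps [w] below
    [Q^2 2^lambda < Q'], so the Chinese remainder theorem recovers [w] itself.
    In both cases [r_A = w mod Q], and modulo [Q] the mask [u Q] vanishes while
    [r_B^{-1} r_B = 1]. *)

From mathcomp Require Import all_boot all_algebra zify.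
Import GRing.Theory.

Lemma chinese_remainder_big (I : eqType) (q : I -> nat) (r : seq I) x y :
  (forall i j, i != j -> coprime (q i) (q j)) -> uniq r ->
  (forall i, x = y %[mod q i]) -> x = y %[mod \prod_(i <- r) q i].
Proof.
move=> q_coprime + xy; elim: r => [|i r IHr] /=; first by rewrite big_nil !modn1.
case/andP=> i_r r_uniq; rewrite big_cons; apply/eqP.
have coprime_i_r : coprime (q i) (\prod_(j <- r) q j).
  rewrite big_seq; elim/big_rec: _ => [|j p j_r coprime_i_p]; first exact: coprimen1.
  by rewrite coprimeMr coprime_i_p andbT q_coprime //; apply: contraNneq i_r => ->.
by rewrite chinese_remainder // xy (IHr r_uniq) !eqxx.
Qed.

Lemma invQ_lt Q r : prime Q -> invQ Q r < Q.
Proof. by move=> pQ; rewrite /invQ -[X in _ < X](Fp_cast pQ) ltn_ord. Qed.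

Lemma invQ_mul Q r : prime Q -> r %% Q != 0 -> invQ Q r * r = 1 %[mod Q].
Proof.
move=> pQ r_nz.
have r_unit : (r%:R : 'F_Q)%R != 0%R by rewrite -val_eqE /= val_Fp_nat.
have : ((invQ Q r * r)%:R = 1%:R :> 'F_Q)%R.
  by rewrite natrM /invQ natr_Zp -Zp_nat mulVf.
by move/(congr1 (@nat_of_ord _)); rewrite !val_Fp_nat.
Qed.

Lemma dec_hadd_hmul_enc q (S : AHE q) (r1 r2 r3 : rnd S) a b k c :
  dec (hadd (hmul (hadd (enc r1 a) (enc r2 b)) k) (enc r3 c))
  = ((a + b) * k + c) %% q.
Proof.
by rewrite !dec_hadd !dec_hmul !dec_hadd !dec_enc (modnDm a b) modnMml modnDm.
Qed.

Definition masked_sum (Q sA sB rB u : nat) : nat := (sA + sB) * invQ Q rB + u * Q.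

Lemma masked_sum_lt Q t sA sB rB u :
  prime Q -> sA < Q -> sB < Q -> 1 < t -> u < t ->
  masked_sum Q sA sB rB u < Q ^ 2 * t.
Proof.
move=> pQ sAQ sBQ t_gt1 ut; rewrite /masked_sum.
have := invQ_lt Q rB pQ; move: (invQ Q rB) => k kQ.
have sum_le : (sA + sB) * k <= (2 * Q - 2) * (Q - 1) by apply: leq_mul; lia.
have mask_le : u * Q <= (t - 1) * Q by apply: leq_mul; lia.
nia.
Qed.

Lemma masked_sum_mul Q sA sB rB u :
  prime Q -> rB %% Q != 0 ->
  masked_sum Q sA sB rB u * rB = sA + sB %[mod Q].
Proof.
move=> pQ rB_nz; rewrite /masked_sum mulnDl -mulnA mulnAC -modnDm modnMl addn0.
by rewrite -modnMmr invQ_mul // modnMmr muln1 modn_mod.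
Qed.

Theorem proposition1
  (Q lambda m : nat) (q : 'I_m -> nat) (S : forall i : 'I_m, AHE (q i))
  (HQ : prime Q) (Hm : 0 < m)
  (Hcop : forall i j : 'I_m, i != j -> coprime (q i) (q j))
  (Hm1 : m = 1 -> forall i : 'I_m, q i = Q)
  (Hmgt : 1 < m -> Q ^ 2 * 2 ^ lambda < \prod_(i < m) q i)
  (Hlam : 1 < m -> 0 < lambda)
  (* Alice's and Bob's random choices *)
  (sA sB rB u : nat)
  (HsA : sA < Q) (HsB : sB < Q) (HrB : 0 < rB < Q)
  (Hu : if 1 < m then u < 2 ^ lambda else u == 0)
  (* encryption randomness *)
  (ra rb rc : forall i : 'I_m, rnd (S i))
  (* Alice's CRT recovery: v is the element of Z_{Q'} matching all decryptions *)
  (v : nat) :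
  let c := fun i : 'I_m => enc (ra i) (sA %% q i) in
  let d := fun i : 'I_m =>
    hadd (hmul (hadd (c i) (enc (rb i) sB)) (invQ Q rB %% q i))
         (enc (rc i) ((u * Q) %% q i)) in
  v < \prod_(i < m) q i ->
  (forall i : 'I_m, v %% q i = dec (d i)) ->
  let rA := v %% Q in
  rA * rB = sA + sB %[mod Q].
Proof.
move=> c d v_lt v_dec rA; set w := masked_sum Q sA sB rB u.
have v_w i : v = w %[mod q i].
  rewrite v_dec dec_hadd_hmul_enc /w /masked_sum modnDmr; apply/eqP.
  by rewrite eqn_modDr -modnMml modnDml modnMml modnMmr.
have v_w_Q : v = w %[mod Q].
  have [m_gt1 | m_le1] := ltnP 1 m.
    have w_lt : w < \prod_(i < m) q i.
      rewrite m_gt1 in Hu; apply: ltn_trans (Hmgt m_gt1).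
      apply: masked_sum_lt => //.
      exact: leq_ltn_trans (Hlam m_gt1) (ltn_expl lambda (ltnSn 1)).
    have := @chinese_remainder_big _ q _ v w Hcop (index_enum_uniq _) v_w.
    by rewrite (modn_small v_lt) (modn_small w_lt) => ->.
  have m1 : m = 1 by apply/eqP; rewrite eqn_leq m_le1.
  by have := v_w (Ordinal Hm); rewrite Hm1.
have rB_nz : rB %% Q != 0 by rewrite modn_small; case/andP: HrB => [/lt0n_neq0].
by rewrite /rA v_w_Q modnMml masked_sum_mul.
Qed.
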